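(* Let $s\in[-\infty,0]$, let $\rho$ be a $2\times2$ density matrix and $X,Y$ be $2\times2$ Hermitian matrices. Then $|\operatorname{Re}\zeta_\rho^s(X,Y)|^2\le I^s(\rho,X)\,I^s(\rho,Y)\le|\zeta_\rho^s(X,Y)|^2,$ where $\operatorname{Re}\zeta_\rho^s(X,Y)=\frac14\left(I^s(\rho,X+Y)-I^s(\rho,X-Y)\right)$ and $\operatorname{Im}\zeta_\rho^s(X,Y)=\frac{1}{2i}\mathrm{Tr}\big[\rho[X,Y]\big]$.
   Context: Write $\rho=\sum_{i=1}^2\lambda_i|\psi_i\rangle\langle\psi_i|$ (orthonormal eigenbasis, $\lambda_1\ge\lambda_2\ge0$). For $-\infty<s<0$ and $a_1,a_2>0$ let $m_s(a_1,a_2)=\left(\frac{a_1^s+a_2^s}{2}\right)^{1/s}$; $m_0(a_1,a_2)=\sqrt{a_1a_2}$; $m_{-\infty}(a_1,a_2)=\min\{a_1,a_2\}$; and $m_s(a,0)=m_s(0,a)=m_s(0,0)=0$. Define $\zeta_\rho^s(X,Y)=\mathrm{Tr}[\rho X^\dagger Y]-\sum_{i,j} m_s(\lambda_i,\lambda_j)\langle\psi_i|X^\dagger|\psi_j\rangle\langle\psi_j|Y|\psi_i\rangle$ and $I^s(\rho,X)=\zeta_\rho^s(X,X)$. $[X,Y]=XY-YX$. *)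

From HB Require Import structures.
From mathcomp Require Import all_boot all_order all_algebra.
From mathcomp Require Import complex.
From mathcomp Require Import reals constructive_ereal exp.
Set Implicit Arguments. Unset Strict Implicit. Unset Printing Implicit Defensive.
Import Order.TTheory GRing.Theory Num.Theory.
Local Open Scope ring_scope.

Definition adjmx (R : rcfType) m n (A : 'M[R[i]]_(m, n)) : 'M[R[i]]_(n, m) :=
  (map_mx (@conjc R) A)^T.

Definition is_hermitian (R : rcfType) n (A : 'M[R[i]]_n) : Prop := adjmx A = A.

Definition density_matrix (R : rcfType) n (rho : 'M[R[i]]_n) : Prop :=
  [/\ is_hermitian rho,
      (forall v : 'cV[R[i]]_n, 0 <= (adjmx v *m rho *m v) 0 0)
    & \tr rho = 1].

Definition msmean (R : realType) (s : \bar R) (a b : R) : R :=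
  if (a == 0) || (b == 0) then 0 else
  match s with
  | -oo%E => Num.min a b
  | (r%:E)%E => if r == 0 then Num.sqrt (a * b)
                else powR ((powR a r + powR b r) / 2) r^-1
  | +oo%E => 0 (* not used: s <= 0 *)
  end.

(* zeta_rho^s(X,Y) for rho = sum_i lam i |psi i><psi i| *)
Definition zeta (R : realType) (s : \bar R) (lam : 'I_2 -> R)
    (psi : 'I_2 -> 'cV[R[i]]_2) (rho X Y : 'M[R[i]]_2) : R[i] :=
  \tr (rho *m adjmx X *m Y)
  - \sum_(i < 2) \sum_(j < 2)
      ((msmean s (lam i) (lam j))%:C)%C
      * (adjmx (psi i) *m adjmx X *m psi j) 0 0
      * (adjmx (psi j) *m Y *m psi i) 0 0.

Definition Ifisher (R : realType) (s : \bar R) (lam : 'I_2 -> R)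
    (psi : 'I_2 -> 'cV[R[i]]_2) (rho X : 'M[R[i]]_2) : R[i] :=
  zeta s lam psi rho X X.

(* In the eigenbasis of rho, the diagonal terms of zeta cancel because
   m_s(lambda, lambda) = lambda, so with x = <psi_0|X|psi_1>, y = <psi_0|Y|psi_1>
   and m = m_s(lambda_0, lambda_1),
     zeta(X, Y) = (lambda_0 - m) x conj(y) + (lambda_1 - m) conj(x) y.
   Writing a = lambda_0 - m and b = lambda_1 - m, one computes
     I(X) I(Y) - (Re zeta)^2 = (a + b)^2 (Im (x conj y))^2 >= 0,
     |zeta|^2 - I(X) I(Y) = -4 a b (Im (x conj y))^2,
   and the power mean lies between lambda_1 and lambda_0, so a b <= 0. *)
From HB Require Import structures.
From mathcomp Require Import all_boot all_order all_algebra.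
From mathcomp Require Import complex.
From mathcomp Require Import reals constructive_ereal exp.
From mathcomp Require Import ring lra.
Set Implicit Arguments. Unset Strict Implicit. Unset Printing Implicit Defensive.
Import Order.TTheory GRing.Theory Num.Theory.
Local Open Scope ring_scope.
Local Open Scope complex_scope.

Section PowerMean.
Variable R : realType.

Lemma msmean_sym (s : \bar R) (a b : R) : msmean s a b = msmean s b a.
Proof.
rewrite /msmean orbC; case: ifP => // _.
case: s => [r| |]; last exact: minC.
- by rewrite [a * b]mulrC [powR a r + _]addrC.
- reflexivity.
Qed.

Lemma msmean_id (s : \bar R) (a : R) : (s <= 0)%E -> 0 <= a -> msmean s a a = a.
Proof.
move=> s_le0 a_ge0; rewrite /msmean orbb; case: eqP => [->//|a_neq0].
case: s s_le0 => [r| |] //= r_le0; last by rewrite minxx.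
case: eqP => [_|/eqP r_neq0]; first by rewrite -expr2 sqrtr_sqr ger0_norm.
by rewrite mulrDl -splitr -powRrM mulfV // powRr1.
Qed.

Lemma powR_invK (a r : R) : 0 <= a -> r != 0 -> (a `^ r) `^ r^-1 = a.
Proof. by move=> a_ge0 r_neq0; rewrite -powRrM mulfV // powRr1. Qed.

Lemma ler_powR_nexp (r x y : R) : r < 0 -> 0 < x -> x <= y -> y `^ r <= x `^ r.
Proof.
move=> r_lt0 x_gt0 le_xy; have y_gt0 := lt_le_trans x_gt0 le_xy.
rewrite -ler_ln ?posrE ?powR_gt0 // !ln_powR.
by apply: ler_wnM2l; [exact: ltW | rewrite ler_ln ?posrE].
Qed.

Lemma geomean_between (a b : R) : 0 <= b -> b <= a -> b <= Num.sqrt (a * b) <= a.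
Proof.
move=> b_ge0 le_ba; have a_ge0 := le_trans b_ge0 le_ba.
rewrite -{1}(ger0_norm b_ge0) -{3}(ger0_norm a_ge0) -!sqrtr_sqr.
by rewrite !ler_wsqrtr // expr2 ?ler_wpM2r ?ler_wpM2l.
Qed.

Lemma powmean_between (r a b : R) : r < 0 -> 0 < b -> b <= a ->
  b <= ((a `^ r + b `^ r) / 2) `^ r^-1 <= a.
Proof.
move=> r_lt0 b_gt0 le_ba; have a_gt0 := lt_le_trans b_gt0 le_ba.
have rV_lt0 : r^-1 < 0 by rewrite invr_lt0.
have le_ab_r : a `^ r <= b `^ r by apply: ler_powR_nexp.
have ar_gt0 : 0 < a `^ r by apply: powR_gt0.
have r_neq0 := ltr0_neq0 r_lt0.
rewrite -{1}(powR_invK (ltW b_gt0) r_neq0) -{3}(powR_invK (ltW a_gt0) r_neq0).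
by apply/andP; split; apply: ler_powR_nexp => //; lra.
Qed.

Lemma msmean_between (s : \bar R) (a b : R) : (s <= 0)%E -> 0 <= b -> b <= a ->
  b <= msmean s a b <= a.
Proof.
move=> s_le0 b_ge0 le_ba; rewrite /msmean.
have [b0|b_neq0] := eqVneq b 0; first by rewrite b0 orbT lexx -b0.
have b_gt0 : 0 < b by rewrite lt_def b_neq0.
rewrite orbF (gt_eqF (lt_le_trans b_gt0 le_ba)).
case: s s_le0 => [r| |] //= r_le0; last by rewrite ge_min le_min lexx le_ba orbT.
case: eqP => [_|/eqP r_neq0]; first exact: geomean_between.
by apply: powmean_between; rewrite // lt_neqAle r_neq0 -lee_fin.
Qed.

End PowerMean.

Section OffDiagonalForm.
Variable R : rcfType.
Implicit Types (a b : R) (u v : R[i]).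

Definition zeta_offdiag a b u v : R[i] := a%:C * u * v^* + b%:C * u^* * v.

Lemma Re_zeta_offdiag_sqr_le a b u v :
  ((complex.Re (zeta_offdiag a b u v)) ^+ 2)%:C <= zeta_offdiag a b u u * zeta_offdiag a b v v.
Proof.
case: u v => [u1 u2] [v1 v2]; rewrite /zeta_offdiag; simpc => /=.
apply/andP; split; first by apply/eqP; ring.
rewrite -subr_ge0.
set d := (X in 0 <= X).
have -> : d = (a + b) ^+ 2 * (u1 * v2 - u2 * v1) ^+ 2 by rewrite /d; ring.
by rewrite mulr_ge0 ?sqr_ge0.
Qed.

Lemma zeta_offdiag_mul_le_normC a b u v : a * b <= 0 ->
  zeta_offdiag a b u u * zeta_offdiag a b v v <= `|zeta_offdiag a b u v| ^+ 2.
Proof.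
move=> ab_le0; rewrite -add_Re2_Im2.
case: u v => [u1 u2] [v1 v2]; rewrite /zeta_offdiag; simpc => /=.
apply/andP; split; first by apply/eqP; ring.
rewrite -subr_ge0.
set d := (X in 0 <= X).
have -> : d = - 4 * (a * b) * (u1 * v2 - u2 * v1) ^+ 2 by rewrite /d; ring.
by apply: mulr_ge0; [lra | exact: sqr_ge0].
Qed.

Lemma Re_zeta_offdiag_polar a b u v :
  (complex.Re (zeta_offdiag a b u v))%:C =
  (zeta_offdiag a b (u + v) (u + v) - zeta_offdiag a b (u - v) (u - v)) / 4.
Proof.
case: u v => [u1 u2] [v1 v2]; rewrite /zeta_offdiag; simpc => /=.
by apply/eqP; rewrite eq_complex /=; apply/andP; split; apply/eqP; field.
Qed.

Lemma Im_zeta_offdiag a b u v :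
  (complex.Im (zeta_offdiag a b u v))%:C = (a - b)%:C * (u * v^* - u^* * v) / (2 * 'i).
Proof.
case: u v => [u1 u2] [v1 v2]; rewrite /zeta_offdiag; simpc => /=.
by apply/eqP; rewrite eq_complex /=; apply/andP; split; apply/eqP; field.
Qed.

End OffDiagonalForm.

Section Adjoint.
Variable R : rcfType.

Lemma adjmxE m n (A : 'M[R[i]]_(m, n)) i j : adjmx A i j = (A j i)^*.
Proof. by rewrite !mxE. Qed.

Lemma adjmxK m n (A : 'M[R[i]]_(m, n)) : adjmx (adjmx A) = A.
Proof. by apply/matrixP => i j; rewrite !adjmxE conjcK. Qed.

Lemma adjmxM m n p (A : 'M[R[i]]_(m, n)) (B : 'M[R[i]]_(n, p)) :
  adjmx (A *m B) = adjmx B *m adjmx A.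
Proof. by rewrite /adjmx map_mxM trmx_mul. Qed.

Lemma hermitianD n (A B : 'M[R[i]]_n) :
  is_hermitian A -> is_hermitian B -> is_hermitian (A + B).
Proof.
by move=> hA hB; rewrite /is_hermitian /adjmx map_mxD linearD; congr (_ + _).
Qed.

Lemma hermitianB n (A B : 'M[R[i]]_n) :
  is_hermitian A -> is_hermitian B -> is_hermitian (A - B).
Proof.
by move=> hA hB; rewrite /is_hermitian /adjmx map_mxB linearB; congr (_ - _).
Qed.

End Adjoint.

Lemma big_ord2 (V : nmodType) (F : 'I_2 -> V) : \sum_(i < 2) F i = F 0 + F 1.
Proof. by rewrite big_ord_recl big_ord1; congr (F _ + F _); apply: val_inj. Qed.

Definition melem (R : rcfType) n (psi : 'I_n -> 'cV[R[i]]_n) (M : 'M[R[i]]_n) i j :=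
  (adjmx (psi i) *m M *m psi j) 0 0.

Section Eigenbasis.
Variables (R : rcfType) (n : nat) (psi : 'I_n -> 'cV[R[i]]_n).
Hypothesis psi_orthonormal : forall i j, adjmx (psi i) *m psi j = (i == j)%:R%:M.
Implicit Types A B M : 'M[R[i]]_n.

Lemma melemE M i j : melem psi M i j = (adjmx (psi i) *m M *m psi j) 0 0.
Proof. by []. Qed.

Lemma melemD A B i j : melem psi (A + B) i j = melem psi A i j + melem psi B i j.
Proof. by rewrite /melem mulmxDr mulmxDl mxE. Qed.

Lemma melemB A B i j : melem psi (A - B) i j = melem psi A i j - melem psi B i j.
Proof. by rewrite /melem mulmxDr mulmxDl mulmxN mulNmx !mxE. Qed.

Lemma melem_hermitian A i j : is_hermitian A -> melem psi A j i = (melem psi A i j)^*.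
Proof. by move=> hA; rewrite /melem -adjmxE !adjmxM adjmxK hA mulmxA. Qed.

Lemma sum_eigenprojectors : \sum_k psi k *m adjmx (psi k) = 1%:M.
Proof.
pose U : 'M[R[i]]_n := \matrix_(a, k) psi k a 0.
have U_unitary : adjmx U *m U = 1%:M.
  apply/matrixP => i j.
  have := congr1 (fun M : 'M[R[i]]_1 => M 0 0) (psi_orthonormal i j).
  rewrite !mxE eqxx mulr1n => <-.
  by apply: eq_bigr => a _; rewrite !mxE.
apply/matrixP => a b; rewrite -(mulmx1C U_unitary) summxE [RHS]mxE.
by apply: eq_bigr => k _; rewrite !mxE big_ord1 adjmxE.
Qed.

Lemma melemM A B i j : melem psi (A *m B) i j = \sum_k melem psi A i k * melem psi B k j.
Proof.
have mulmx11 (P Q : 'M[R[i]]_1) : (P *m Q) 0 0 = P 0 0 * Q 0 0.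
  by rewrite mxE big_ord1.
have -> : A *m B = A *m (\sum_k psi k *m adjmx (psi k)) *m B.
  by rewrite sum_eigenprojectors mulmx1.
rewrite /melem mulmx_sumr !mulmx_suml mulmx_sumr mulmx_suml summxE.
by apply: eq_bigr => k _; rewrite -mulmx11 !mulmxA.
Qed.

Lemma mxtrace_spectral_mul (lam : 'I_n -> R) M :
  \tr ((\sum_i (lam i)%:C *: (psi i *m adjmx (psi i))) *m M) =
  \sum_i (lam i)%:C * melem psi M i i.
Proof.
rewrite mulmx_suml raddf_sum; apply: eq_bigr => i _.
rewrite -scalemxAl /= mxtraceZ -mulmxA mxtrace_mulC.
by rewrite /mxtrace big_ord1.
Qed.

End Eigenbasis.

Section Qubit.
Variables (R : rcfType) (psi : 'I_2 -> 'cV[R[i]]_2).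
Hypothesis psi_orthonormal : forall i j, adjmx (psi i) *m psi j = (i == j)%:R%:M.

Lemma mxtrace_spectral_commutator (lam : 'I_2 -> R) (A B : 'M[R[i]]_2) :
  is_hermitian A -> is_hermitian B ->
  \tr ((\sum_(i < 2) (lam i)%:C *: (psi i *m adjmx (psi i))) *m (A *m B - B *m A)) =
  (lam 0 - lam 1)%:C *
  (melem psi A 0 1 * (melem psi B 0 1)^* - (melem psi A 0 1)^* * melem psi B 0 1).
Proof.
move=> hA hB; rewrite mxtrace_spectral_mul !big_ord2 !melemB !(melemM psi_orthonormal).
rewrite !big_ord2 (melem_hermitian _ 0 1 hA) (melem_hermitian _ 0 1 hB) rmorphB /=.
by ring.
Qed.

End Qubit.

Lemma zetaE (R : realType) (psi : 'I_2 -> 'cV[R[i]]_2) (s : \bar R) (lam : 'I_2 -> R)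
    (A B : 'M[R[i]]_2) :
  (forall i j, adjmx (psi i) *m psi j = (i == j)%:R%:M) ->
  (s <= 0)%E -> 0 <= lam 0 -> 0 <= lam 1 -> is_hermitian A -> is_hermitian B ->
  let m := msmean s (lam 0) (lam 1) in
  zeta s lam psi (\sum_(i < 2) (lam i)%:C *: (psi i *m adjmx (psi i))) A B =
  zeta_offdiag (lam 0 - m) (lam 1 - m) (melem psi A 0 1) (melem psi B 0 1).
Proof.
move=> psi_orthonormal s_le0 lam0_ge0 lam1_ge0 hA hB m.
rewrite /zeta hA -mulmxA mxtrace_spectral_mul !big_ord2 -!melemE.
rewrite !(melemM psi_orthonormal) !big_ord2 (melem_hermitian _ 0 1 hA) (melem_hermitian _ 0 1 hB).
rewrite /m (msmean_sym s (lam 1)) !msmean_id // /zeta_offdiag !rmorphB /=.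
by ring.
Qed.

Theorem theorem6 (R : realType) (s : \bar R) (rho X Y : 'M[R[i]]_2)
    (lam : 'I_2 -> R) (psi : 'I_2 -> 'cV[R[i]]_2) :
  (s <= 0)%E ->
  density_matrix rho ->
  (forall i j : 'I_2, adjmx (psi i) *m psi j = (i == j)%:R%:M) ->
  lam 1 <= lam 0 -> 0 <= lam 1 ->
  rho = \sum_(i < 2) ((lam i)%:C)%C *: (psi i *m adjmx (psi i)) ->
  is_hermitian X -> is_hermitian Y ->
  let z := zeta s lam psi rho X Y in
  let Iq := Ifisher s lam psi rho in
  [/\ (((complex.Re z) ^+ 2)%:C)%C <= Iq X * Iq Y,
      Iq X * Iq Y <= `|z| ^+ 2,
      ((complex.Re z)%:C)%C = (Iq (X + Y) - Iq (X - Y)) / 4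
    & ((complex.Im z)%:C)%C = \tr (rho *m (X *m Y - Y *m X)) / (2 * 'i%C)].
Proof.
move=> s_le0 _ psi_orthonormal lam10 lam1_ge0 -> hX hY z Iq.
have lam0_ge0 := le_trans lam1_ge0 lam10.
have /andP[m_ge m_le] := msmean_between s_le0 lam1_ge0 lam10.
have hXpY := hermitianD hX hY; have hXmY := hermitianB hX hY.
rewrite /z /Iq /Ifisher !(zetaE psi_orthonormal) //.
rewrite mxtrace_spectral_commutator // melemD melemB.
split.
- exact: Re_zeta_offdiag_sqr_le.
- by apply: zeta_offdiag_mul_le_normC; nra.
- exact: Re_zeta_offdiag_polar.
- by rewrite Im_zeta_offdiag opprB addrA subrK.
Qed.
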